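(* Let $\Gamma\subset\mathbb{R}$ satisfy property (C). Then for every $0<\epsilon<1$ there exist $N\in\mathbb{N}$ and $\eta_1,\dots,\eta_N\in\Gamma$ such that the exponential polynomial $P(t)=\frac{1}{N}\sum_{j=1}^N e^{i\eta_j t}$ satisfies $|P(t)|\leq\epsilon$ for all $t$ with $\epsilon<|t|<1/\epsilon$.
   Context: Property (C) of a set $\Gamma$: for every $m\in\mathbb{N}$ there are rationally independent numbers $q_1,\dots,q_m$ such that for every $N\in\mathbb{N}$ there exist $a_1,\dots,a_m$ with $\bigcup_{j=1}^m\{a_j+q_j,a_j+2q_j,\dots,a_j+Nq_j\}\subset\Gamma$. *)

From Stdlib Require Import Reals QArith Qreals.
Open Scope R_scope.

Fixpoint rsum (n : nat) (f : nat -> R) : R :=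
  match n with
  | O => 0
  | S k => rsum k f + f k
  end.

Definition rat_indep (m : nat) (q : nat -> R) : Prop :=
  forall c : nat -> Q,
    rsum m (fun j => Q2R (c j) * q j) = 0 ->
    forall j, (j < m)%nat -> Q2R (c j) = 0.

Definition propC (Gamma : R -> Prop) : Prop :=
  forall m : nat, exists q : nat -> R,
    rat_indep m q /\
    forall N : nat, exists a : nat -> R,
      forall j k : nat, (j < m)%nat -> (1 <= k <= N)%nat ->
        Gamma (a j + INR k * q j).

(* |P(t)| for P(t) = (1/N) sum_{j<N} e^{i eta_j t}, written via
   |z| = sqrt (Re z ^2 + Im z ^2) with e^{i x} = cos x + i sin x. *)
Definition expoly_abs (N : nat) (eta : nat -> R) (t : R) : R :=
  / INR N * sqrt ((rsum N (fun j => cos (eta j * t))) ^ 2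
                + (rsum N (fun j => sin (eta j * t))) ^ 2).

From Stdlib Require Import Reals QArith Qreals Lra Lia Classical.
From Coquelicot Require Import Coquelicot.
Open Scope R_scope.

(* Take m > 2/eps rationally independent frequencies q_j and, for n large, the
   m progressions a_j + k q_j (1 <= k <= n) inside Gamma, so that N = m n.
   The sum of e^{i eta t} over one progression is geometric, hence at most
   2 / |e^{i q_j t} - 1| in modulus.  Rational independence forbids two of the
   q_j t from lying in 2 pi Z at once, so by compactness of eps <= |t| <= 1/eps
   there is d > 0 with (1 - cos (q_j t)) + (1 - cos (q_l t)) >= d for j <> l.
   Thus all blocks but one are bounded by 2 / sqrt d, the remaining one by n,
   and |P(t)| <= 2 / (sqrt d n) + 1/m <= eps. *)

Lemma rsum_ext n f g : (forall i, (i < n)%nat -> f i = g i) -> rsum n f = rsum n g.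
Proof.
  induction n as [|n IH]; intros Hfg; simpl; [reflexivity|].
  rewrite IH by (intros; apply Hfg; lia). rewrite Hfg by lia. reflexivity.
Qed.

Lemma rsum_le n f g : (forall i, (i < n)%nat -> f i <= g i) -> rsum n f <= rsum n g.
Proof.
  induction n as [|n IH]; intros Hfg; simpl; [lra|].
  pose proof (Hfg n ltac:(lia)). pose proof (IH ltac:(intros; apply Hfg; lia)). lra.
Qed.

Lemma rsum_plus n f g : rsum n (fun i => f i + g i) = rsum n f + rsum n g.
Proof. induction n as [|n IH]; simpl; [lra|]. rewrite IH. lra. Qed.

Lemma rsum_const n c : rsum n (fun _ => c) = INR n * c.
Proof. induction n as [|n IH]; simpl rsum; [simpl; ring|]. rewrite IH, S_INR. ring. Qed.

Lemma rsum_indicator n j v :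
  rsum n (fun i => if Nat.eqb i j then v else 0) = if Nat.ltb j n then v else 0.
Proof.
  induction n as [|n IH]; simpl; [destruct (Nat.ltb_spec j 0); [lia|reflexivity]|].
  rewrite IH.
  destruct (Nat.eqb_spec n j), (Nat.ltb_spec j n), (Nat.ltb_spec j (S n)); try lia; lra.
Qed.

Fixpoint csum (n : nat) (f : nat -> C) : C :=
  match n with O => RtoC 0 | S k => Cplus (csum k f) (f k) end.

Lemma csum_fst n f : fst (csum n f) = rsum n (fun i => fst (f i)).
Proof. induction n as [|n IH]; simpl; [reflexivity|]. rewrite IH. reflexivity. Qed.

Lemma csum_snd n f : snd (csum n f) = rsum n (fun i => snd (f i)).
Proof. induction n as [|n IH]; simpl; [reflexivity|]. rewrite IH. reflexivity. Qed.

Lemma csum_ext n f g : (forall i, (i < n)%nat -> f i = g i) -> csum n f = csum n g.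
Proof.
  induction n as [|n IH]; intros Hfg; simpl; [reflexivity|].
  rewrite IH by (intros; apply Hfg; lia). rewrite Hfg by lia. reflexivity.
Qed.

Lemma csum_add n p f :
  csum (n + p) f = Cplus (csum n f) (csum p (fun k => f (n + k)%nat)).
Proof.
  induction p as [|p IH].
  - rewrite Nat.add_0_r. simpl. ring.
  - rewrite Nat.add_succ_r. simpl. rewrite IH. ring.
Qed.

Lemma csum_mul m n f :
  csum (m * n) f = csum m (fun j => csum n (fun k => f (j * n + k)%nat)).
Proof.
  induction m as [|m IH]; simpl; [reflexivity|].
  rewrite Nat.add_comm, csum_add, IH. reflexivity.
Qed.

Lemma Cmod_csum_le n f : Cmod (csum n f) <= rsum n (fun i => Cmod (f i)).
Proof.
  induction n as [|n IH]; simpl.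
  - rewrite Cmod_0. lra.
  - eapply Rle_trans; [apply Cmod_triangle|]. lra.
Qed.

Definition cis (x : R) : C := (cos x, sin x).

Lemma cis_add x y : Cmult (cis x) (cis y) = cis (x + y).
Proof.
  unfold cis, Cmult; simpl. rewrite cos_plus, sin_plus.
  apply injective_projections; simpl; ring.
Qed.

Lemma Cmod_cis x : Cmod (cis x) = 1.
Proof.
  unfold Cmod, cis; simpl. pose proof (sin2_cos2 x) as H. unfold Rsqr in H.
  replace (cos x * (cos x * 1) + sin x * (sin x * 1)) with 1 by nra. apply sqrt_1.
Qed.

Lemma Cmod_cis_sub1 x : Cmod (Cminus (cis x) 1) = sqrt (2 * (1 - cos x)).
Proof.
  unfold Cmod, cis, Cminus, Cplus, Copp; simpl. f_equal.
  pose proof (sin2_cos2 x) as H. unfold Rsqr in H. nra.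
Qed.

Lemma cis_progression_telescope n x th :
  Cmult (csum n (fun k => cis (x + INR (S k) * th))) (Cminus (cis th) 1)
  = Cminus (cis (x + INR (S n) * th)) (cis (x + th)).
Proof.
  induction n as [|n IH].
  - simpl. replace (x + 1 * th) with (x + th) by ring. ring.
  - cbn [csum].
    transitivity (Cplus (Cmult (csum n (fun k => cis (x + INR (S k) * th))) (Cminus (cis th) 1))
                    (Cminus (Cmult (cis (x + INR (S n) * th)) (cis th))
                            (cis (x + INR (S n) * th)))); [ring|].
    rewrite IH, cis_add, (S_INR (S n)).
    replace (x + INR (S n) * th + th) with (x + (INR (S n) + 1) * th) by ring.
    ring.
Qed.

Lemma Cmod_cis_progression_le_length n x th :
  Cmod (csum n (fun k => cis (x + INR (S k) * th))) <= INR n.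
Proof.
  eapply Rle_trans; [apply Cmod_csum_le|].
  rewrite <- (Rmult_1_r (INR n)), <- rsum_const.
  apply rsum_le. intros. rewrite Cmod_cis. lra.
Qed.

Lemma Cmod_cis_progression_le n x th d :
  0 < d -> d / 2 <= 1 - cos th ->
  Cmod (csum n (fun k => cis (x + INR (S k) * th))) <= 2 / sqrt d.
Proof.
  intros Hd Hth.
  set (S := Cmod (csum n (fun k => cis (x + INR (S k) * th)))).
  assert (Htel : S * sqrt (2 * (1 - cos th)) <= 2).
  { unfold S. rewrite <- Cmod_cis_sub1, <- Cmod_mult, cis_progression_telescope.
    unfold Cminus. eapply Rle_trans; [apply Cmod_triangle|].
    rewrite Cmod_opp, !Cmod_cis. lra. }
  assert (Hsd : 0 < sqrt d) by (apply sqrt_lt_R0; lra).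
  assert (sqrt d <= sqrt (2 * (1 - cos th))) by (apply sqrt_le_1_alt; lra).
  assert (0 <= S) by apply Cmod_ge_0.
  apply (Rmult_le_reg_r (sqrt d)); [lra|].
  replace (2 / sqrt d * sqrt d) with 2 by (field; lra). nra.
Qed.

Definition progressions (n : nat) (a q : nat -> R) (i : nat) : R :=
  a (i / n)%nat + INR (S (i mod n)) * q (i / n)%nat.

Lemma progressions_block n a q j k :
  (k < n)%nat -> progressions n a q (j * n + k) = a j + INR (S k) * q j.
Proof.
  intros Hk. unfold progressions.
  assert (Hdiv : ((j * n + k) / n)%nat = j).
  { rewrite Nat.div_add_l by lia. rewrite Nat.div_small by lia. lia. }
  assert (Hmod : ((j * n + k) mod n)%nat = k).
  { rewrite Nat.add_comm, Nat.Div0.mod_add. apply Nat.mod_small. lia. }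
  rewrite Hdiv, Hmod. reflexivity.
Qed.

Lemma expoly_abs_Cmod N eta t :
  expoly_abs N eta t = / INR N * Cmod (csum N (fun i => cis (eta i * t))).
Proof. unfold expoly_abs, Cmod. rewrite csum_fst, csum_snd. reflexivity. Qed.

Lemma expoly_abs_progressions m n a q t :
  expoly_abs (m * n) (progressions n a q) t
  = / INR (m * n)
    * Cmod (csum m (fun j => csum n (fun k => cis (a j * t + INR (S k) * (q j * t))))).
Proof.
  rewrite expoly_abs_Cmod, csum_mul. do 2 f_equal.
  apply csum_ext; intros j _; apply csum_ext; intros k Hk.
  rewrite progressions_block by exact Hk. f_equal. ring.
Qed.

Lemma pair_lower_bound_all_but_one (f : nat -> R) m d :
  (forall j l, (j < m)%nat -> (l < m)%nat -> j <> l -> d <= f j + f l) ->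
  exists js, forall j, (j < m)%nat -> j <> js -> d / 2 <= f j.
Proof.
  intros Hpair.
  destruct (classic (exists js, (js < m)%nat /\ f js < d / 2)) as [[js [Hjs Hsmall]]|Hnone].
  - exists js. intros j Hj Hne. pose proof (Hpair j js Hj Hjs Hne). lra.
  - exists m. intros j Hj _. apply Rnot_lt_le. intros Hsmall. apply Hnone. eauto.
Qed.

Lemma expoly_abs_progressions_le m n a q t d :
  (0 < m)%nat -> (0 < n)%nat -> 0 < d ->
  (forall j l, (j < m)%nat -> (l < m)%nat -> j <> l ->
     d <= (1 - cos (q j * t)) + (1 - cos (q l * t))) ->
  expoly_abs (m * n) (progressions n a q) t <= 2 / (sqrt d * INR n) + / INR m.
Proof.
  intros Hm Hn Hd Hsep.
  destruct (pair_lower_bound_all_but_one (fun j => 1 - cos (q j * t)) m d Hsep) as [js Hjs].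
  set (B := fun j => csum n (fun k => cis (a j * t + INR (S k) * (q j * t)))).
  assert (HB : forall j, (j < m)%nat ->
                 Cmod (B j) <= 2 / sqrt d + (if Nat.eqb j js then INR n else 0)).
  { intros j Hj.
    assert (0 <= 2 / sqrt d) by (apply Rlt_le, Rdiv_lt_0_compat, sqrt_lt_R0; lra).
    pose proof (Cmod_cis_progression_le_length n (a j * t) (q j * t)).
    destruct (Nat.eqb_spec j js) as [->|Hne]; [unfold B; lra|].
    rewrite Rplus_0_r. apply Cmod_cis_progression_le; auto. }
  assert (Hsum : Cmod (csum m B) <= INR m * (2 / sqrt d) + INR n).
  { eapply Rle_trans; [apply Cmod_csum_le|]. eapply Rle_trans; [apply rsum_le, HB|].
    rewrite rsum_plus, rsum_const, rsum_indicator.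
    pose proof (pos_INR n). destruct (Nat.ltb js m); lra. }
  assert (0 < INR m) by (apply lt_0_INR; lia).
  assert (0 < INR n) by (apply lt_0_INR; lia).
  assert (0 < sqrt d) by (apply sqrt_lt_R0; lra).
  rewrite expoly_abs_progressions, mult_INR.
  apply Rle_trans with (/ (INR m * INR n) * (INR m * (2 / sqrt d) + INR n)).
  - apply Rmult_le_compat_l; [left; apply Rinv_0_lt_compat; nra | exact Hsum].
  - right. field. lra.
Qed.

Lemma rat_indep_int m q (c : nat -> Z) :
  rat_indep m q -> rsum m (fun i => IZR (c i) * q i) = 0 ->
  forall j, (j < m)%nat -> c j = 0%Z.
Proof.
  intros Hind Hsum j Hj. apply eq_IZR.
  assert (HQ : forall z, Q2R (inject_Z z) = IZR z).
  { intros z. unfold Q2R; simpl. rewrite Rinv_1, Rmult_1_r. reflexivity. }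
  rewrite <- HQ. apply (Hind (fun i => inject_Z (c i))); [|exact Hj].
  rewrite <- Hsum. apply rsum_ext. intros i _. rewrite HQ. reflexivity.
Qed.

Lemma rat_indep_neq0 m q l : rat_indep m q -> (l < m)%nat -> q l <> 0.
Proof.
  intros Hind Hl Hq0.
  assert (Hsum : rsum m (fun i => IZR (if Nat.eqb i l then 1%Z else 0%Z) * q i) = 0).
  { rewrite (rsum_ext m _ (fun i => if Nat.eqb i l then 0 else 0)), rsum_indicator.
    - destruct (Nat.ltb l m); reflexivity.
    - intros i _. destruct (Nat.eqb_spec i l) as [->|]; [rewrite Hq0|]; simpl; ring. }
  pose proof (rat_indep_int m q _ Hind Hsum l Hl) as H1.
  cbv beta in H1. rewrite Nat.eqb_refl in H1. discriminate.
Qed.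

Lemma rat_indep_int_pair m q j l x y :
  rat_indep m q -> (j < m)%nat -> (l < m)%nat -> j <> l ->
  IZR x * q j + IZR y * q l = 0 -> x = 0%Z.
Proof.
  intros Hind Hj Hl Hjl Hxy.
  assert (Hsum : rsum m (fun i => IZR ((if Nat.eqb i j then x else 0)
                                       + (if Nat.eqb i l then y else 0)) * q i) = 0).
  { rewrite (rsum_ext m _ (fun i => (if Nat.eqb i j then IZR x * q j else 0)
                                   + (if Nat.eqb i l then IZR y * q l else 0))).
    - rewrite rsum_plus, !rsum_indicator.
      destruct (Nat.ltb_spec j m), (Nat.ltb_spec l m); try lia. exact Hxy.
    - intros i _. rewrite plus_IZR.
      destruct (Nat.eqb_spec i j), (Nat.eqb_spec i l); subst; simpl; ring. }
  pose proof (rat_indep_int m q _ Hind Hsum j Hj) as Hcj. cbv beta in Hcj.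
  rewrite Nat.eqb_refl in Hcj. destruct (Nat.eqb_spec j l); [contradiction|]. lia.
Qed.

Lemma cos_eq_1_PI_multiple x : cos x = 1 -> exists k : Z, x = IZR k * PI.
Proof.
  intros Hx. apply sin_eq_0_0.
  pose proof (sin2_cos2 x) as H. unfold Rsqr in H. rewrite Hx in H. nra.
Qed.

Lemma rat_indep_cos_pair_neq1 m q j l t :
  rat_indep m q -> (j < m)%nat -> (l < m)%nat -> j <> l -> t <> 0 ->
  cos (q j * t) = 1 -> cos (q l * t) = 1 -> False.
Proof.
  intros Hind Hj Hl Hjl Ht Hcj Hcl.
  destruct (cos_eq_1_PI_multiple _ Hcj) as [kj Hkj].
  destruct (cos_eq_1_PI_multiple _ Hcl) as [kl Hkl].
  assert (Hrel : IZR kl * q j + IZR (- kj) * q l = 0).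
  { apply (Rmult_eq_reg_r t); [|exact Ht]. rewrite opp_IZR.
    transitivity (IZR kl * (q j * t) - IZR kj * (q l * t)); [ring|].
    rewrite Hkj, Hkl. ring. }
  pose proof (rat_indep_int_pair m q j l kl (- kj) Hind Hj Hl Hjl Hrel) as Hkl0.
  rewrite Hkl0, Rmult_0_l in Hkl.
  apply (rat_indep_neq0 m q l Hind Hl).
  destruct (Rmult_integral _ _ Hkl); [assumption|contradiction].
Qed.

Lemma continuous_pos_lower_bound (g : R -> R) a b :
  (forall t, a <= t <= b -> continuity_pt g t) ->
  (forall t, a <= t <= b -> 0 < g t) ->
  exists d, 0 < d /\ forall t, a <= t <= b -> d <= g t.
Proof.
  intros Hcont Hpos.
  destruct (Rle_or_lt a b) as [Hab|Hba].
  - destruct (continuity_ab_min g a b Hab Hcont) as [tmin [Hmin Htmin]].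
    exists (g tmin). auto.
  - exists 1. split; [lra|]. intros; lra.
Qed.

Lemma cos_mul_Rabs q t : cos (q * Rabs t) = cos (q * t).
Proof.
  unfold Rabs. destruct (Rcase_abs t); [|reflexivity].
  rewrite <- cos_neg. f_equal. ring.
Qed.

Lemma cos_pair_lower_bound m q j l a b :
  rat_indep m q -> 0 < a -> (j < m)%nat -> (l < m)%nat -> j <> l ->
  exists d, 0 < d /\ forall t, a <= Rabs t <= b ->
    d <= (1 - cos (q j * t)) + (1 - cos (q l * t)).
Proof.
  intros Hind Ha Hj Hl Hjl.
  destruct (continuous_pos_lower_bound
              (fun s => (1 - cos (q j * s)) + (1 - cos (q l * s))) a b) as [d [Hd Hbound]].
  - intros s _. reg.
  - intros s Hs.
    pose proof (COS_bound (q j * s)). pose proof (COS_bound (q l * s)).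
    destruct (Req_dec (cos (q j * s)) 1), (Req_dec (cos (q l * s)) 1); try lra.
    exfalso. apply (rat_indep_cos_pair_neq1 m q j l s); auto; lra.
  - exists d. split; [exact Hd|]. intros t Ht.
    rewrite <- (cos_mul_Rabs (q j)), <- (cos_mul_Rabs (q l)). auto.
Qed.

Lemma uniform_lower_bound {X : Type} n (D : nat -> X -> Prop) (f : nat -> X -> R) :
  (forall i, (i < n)%nat -> exists d, 0 < d /\ forall x, D i x -> d <= f i x) ->
  exists d, 0 < d /\ forall i, (i < n)%nat -> forall x, D i x -> d <= f i x.
Proof.
  induction n as [|n IH]; intros Hbound.
  - exists 1. split; [lra|]. intros; lia.
  - destruct IH as [d1 [Hd1 H1]]; [intros; apply Hbound; lia|].
    destruct (Hbound n ltac:(lia)) as [d2 [Hd2 H2]].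
    exists (Rmin d1 d2). split; [apply Rmin_pos; assumption|].
    intros i Hi x Hx. destruct (Nat.eq_dec i n) as [->|Hne].
    + pose proof (Rmin_r d1 d2). pose proof (H2 x Hx). lra.
    + pose proof (Rmin_l d1 d2). pose proof (H1 i ltac:(lia) x Hx). lra.
Qed.

Lemma cos_separation m q a b :
  rat_indep m q -> 0 < a ->
  exists d, 0 < d /\ forall j l, (j < m)%nat -> (l < m)%nat -> j <> l ->
    forall t, a <= Rabs t <= b -> d <= (1 - cos (q j * t)) + (1 - cos (q l * t)).
Proof.
  intros Hind Ha.
  destruct (uniform_lower_bound m
              (fun j p => (snd p < m)%nat /\ j <> snd p /\ a <= Rabs (fst p) <= b)
              (fun j p => (1 - cos (q j * fst p)) + (1 - cos (q (snd p) * fst p))))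
    as [d [Hd Hbound]].
  - intros j Hj.
    destruct (uniform_lower_bound m (fun l t => j <> l /\ a <= Rabs t <= b)
                (fun l t => (1 - cos (q j * t)) + (1 - cos (q l * t)))) as [d [Hd Hbound]].
    + intros l Hl. destruct (Nat.eq_dec j l) as [->|Hjl].
      * exists 1. split; [lra|]. intros t [Habs _]. contradiction.
      * destruct (cos_pair_lower_bound m q j l a b Hind Ha Hj Hl Hjl) as [d [Hd Hb]].
        exists d. split; [exact Hd|]. intros t [_ Ht]. auto.
    + exists d. split; [exact Hd|]. intros [t l] (Hl & Hjl & Ht). simpl. auto.
  - exists d. split; [exact Hd|]. intros j l Hj Hl Hjl t Ht.
    apply (Hbound j Hj (t, l)). simpl. auto.
Qed.

Theorem lemma5 (Gamma : R -> Prop) (HC : propC Gamma) (eps : R)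
  (Heps0 : 0 < eps) (Heps1 : eps < 1) :
  exists (N : nat) (eta : nat -> R),
    (1 <= N)%nat /\
    (forall j, (j < N)%nat -> Gamma (eta j)) /\
    (forall t : R, eps < Rabs t < / eps -> expoly_abs N eta t <= eps).
Proof.
  destruct (archimed_cor1 (eps / 2) ltac:(lra)) as [m [Hm Hm0]].
  destruct (HC m) as [q [Hind Hprog]].
  destruct (cos_separation m q eps (/ eps) Hind Heps0) as [d [Hd Hsep]].
  assert (Hsd : 0 < sqrt d) by (apply sqrt_lt_R0; lra).
  destruct (archimed_cor1 (eps * sqrt d / 4)) as [n [Hn Hn0]]; [nra|].
  destruct (Hprog n) as [a Ha].
  exists (m * n)%nat, (progressions n a q). split; [|split].
  - nia.
  - intros i Hi. unfold progressions. apply Ha.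
    + apply Nat.Div0.div_lt_upper_bound. lia.
    + pose proof (Nat.mod_upper_bound i n ltac:(lia)). lia.
  - intros t Ht.
    assert (Hblocks : 2 / (sqrt d * INR n) < eps / 2).
    { assert (0 < INR n) by (apply lt_0_INR; lia).
      replace (2 / (sqrt d * INR n)) with (2 / sqrt d * / INR n) by (field; lra).
      replace (eps / 2) with (2 / sqrt d * (eps * sqrt d / 4)) by (field; lra).
      apply Rmult_lt_compat_l; [apply Rdiv_lt_0_compat|]; lra. }
    refine (Rle_trans _ _ _ (expoly_abs_progressions_le m n a q t d Hm0 Hn0 Hd _) _).
    + intros j l Hj Hl Hjl. apply Hsep; auto; lra.
    + lra.
Qed.
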